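(* Assume hypothesis (A). Then for every $\gamma=(\gamma_1,\dots,\gamma_d)\in\Gamma$, the function $h_\gamma:\mathbb{Z}_+^d\to\mathbb{R}_+$ defined by $$h_\gamma(x)=\sum_{i=1}^d \exp(\overrightarrow{\gamma_i}\cdot x),\qquad x\in\mathbb{Z}_+^d,$$ satisfies $$\limsup_{|x|\to\infty}\frac{\mathcal{L}h_\gamma(x)}{h_\gamma(x)}=-\min_{1\le i\le d}\frac{\gamma_i}{G_{ii}}\Bigl(\frac{\mu_i}{1+\gamma_i}-\nu_i\Bigr).$$
   Context: Jackson network with $d$ queues: arrival rates $\lambda_1,\dots,\lambda_d\ge 0$, service rates $\mu_1,\dots,\mu_d>0$, routing matrix $P=(p_{ij})_{i,j=1}^d$ with nonnegative entries, $p_{ii}=0$, $\sum_j p_{ij}\le 1$, and $p_{i0}=1-\sum_{j=1}^d p_{ij}$. Let $\epsilon^i$ be the $i$-th unit vector of $\mathbb{Z}^d$ and let $q:\mathbb{Z}^d\to\mathbb{R}_+$ be given by $q(\epsilon^i)=\lambda_i$, $q(-\epsilon^i)=\mu_ip_{i0}$, $q(\epsilon^j-\epsilon^i)=\mu_ip_{ij}$ ($i,j\in\{1,\dots,d\}$), and $q(y)=0$ otherwise. The queue-length process $(Z(t))$ is the continuous-time Markov process on $\mathbb{Z}_+^d$ with generator $\mathcal{L}f(y)=\sum_{z\in\mathbb{Z}_+^d}q(z-y)(f(z)-f(y))$, $y\in\mathbb{Z}_+^d$. Hypothesis (A): the matrix $(q(x-y))_{x,y\in\mathbb{Z}^d}$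 is irreducible; equivalently (A1) the spectral radius of $P$ is $<1$ (every customer eventually leaves) and (A2) for every $i$ there are $n\in\mathbb{N}$ and $j$ with $\lambda_jp^{(n)}_{ji}>0$ ($p^{(n)}$ the $n$-step transition probabilities of $P$). Under (A) the traffic equations $\nu_j=\lambda_j+\sum_{i=1}^d\nu_ip_{ij}$, $j=1,\dots,d$, have a unique solution, with all $\nu_i>0$. Let $G=(I-P)^{-1}=\sum_{n\ge0}P^n$. Let $(\xi_n)$ be the Markov chain on $\{0,1,\dots,d\}$ with transition probabilities $p_{ij}$ from $i\in\{1,\dots,d\}$ to $j\in\{0,\dots,d\}$ and $0$ absorbing; for $j\ge1$ let $\tau_j=\inf\{n\ge0:\xi_n=j\}$ ($\inf\emptyset=+\infty$) and $Q_{ij}=\mathbb{P}_i(\tau_j<\infty)$ (so $Q_{ii}=1$). For $\gamma\in\mathbb{R}_+^d$ define vectors $\overrightarrow{\gamma_i}=(\gamma_i^1,\dots,\gamma_i^d)$ by $\gamma_i^j=\log(1+Q_{ji}\gamma_i)$. $\Gamma$ is the set of $\gamma\in\mathbb{R}_+^d$ such that for every $i\in\{1,\dots,d\}$ and every nonzero $v\in\mathbb{R}_+^d$ with $v^i=0$, $\overrightarrow{\gamma_i}\cdot v<\max_{1\le j\le d}\overrightarrow{\gamma_j}\cdot v$ (usual scalar product). *)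

From Stdlib Require Import Relations.
From HB Require Import structures.
From mathcomp Require Import all_boot all_order all_algebra.
From mathcomp Require Import all_classical all_reals all_analysis.
Set Implicit Arguments. Unset Strict Implicit. Unset Printing Implicit Defensive.
Import Order.TTheory GRing.Theory Num.Theory numFieldNormedType.Exports.
Local Open Scope ring_scope.
Local Open Scope classical_set_scope.

Section Jackson.
Variables (R : realType) (d : nat).
Variables (lam mu : 'I_d -> R) (P : 'M[R]_d).

Definition p0 (i : 'I_d) : R := 1 - \sum_(j < d) P i j.

Definition qrate (v : 'I_d -> int) : R :=
  \sum_(i < d) (lam i * ([forall k, v k == ((k == i) : nat)%:Z])%:R
               + mu i * p0 i * ([forall k, v k == - ((k == i) : nat)%:Z])%:R)
  + \sum_(i < d) \sum_(j < d | j != i)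
      mu i * P i j * ([forall k, v k == ((k == j) : nat)%:Z - ((k == i) : nat)%:Z])%:R.

Definition hypA : Prop :=
  forall x y : 'I_d -> int,
    Relation_Operators.clos_trans ('I_d -> int)
      (fun a b => 0 < qrate (fun k => a k - b k)) x y.

Definition up (i : 'I_d) (y : 'I_d -> nat) : 'I_d -> nat := fun k => (y k + (k == i))%N.
Definition dn (i : 'I_d) (y : 'I_d -> nat) : 'I_d -> nat := fun k => (y k - (k == i))%N.

(* generator L f(y) = sum_{z in Z_+^d} q(z-y) (f z - f y), written out *)
Definition gen (f : ('I_d -> nat) -> R) (y : 'I_d -> nat) : R :=
  \sum_(i < d) lam i * (f (up i y) - f y)
  + \sum_(i < d) (0 < y i)%N%:R * (mu i * p0 i) * (f (dn i y) - f y)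
  + \sum_(i < d) \sum_(j < d | j != i)
      (0 < y i)%N%:R * (mu i * P i j) * (f (up j (dn i y)) - f y).

(* P_i(tau_j <= n) for the chain on {0,..,d} with 0 absorbing *)
Fixpoint hitn (j : 'I_d) (n : nat) (i : 'I_d) : R :=
  match n with
  | 0 => (i == j)%:R
  | n'.+1 => if i == j then 1 else \sum_(k < d) P i k * hitn j n' k
  end.

(* Q_{ij} = P_i(tau_j < oo) = lim_n P_i(tau_j <= n) *)
Definition Qhit (i j : 'I_d) : R := limn (fun n => hitn j n i).

Definition dotv (u v : 'I_d -> R) : R := \sum_(k < d) u k * v k.

Definition gvec (gam : 'I_d -> R) (i : 'I_d) : 'I_d -> R :=
  fun j => ln (1 + Qhit j i * gam i).

Definition inGamma (gam : 'I_d -> R) : Prop :=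
  (forall i, 0 <= gam i) /\
  forall (i : 'I_d) (v : 'I_d -> R),
    (forall k, 0 <= v k) -> (exists k, v k != 0) -> v i = 0 ->
    ((dotv (gvec gam i) v)%:E < \big[Order.max/-oo%E]_(j < d) (dotv (gvec gam j) v)%:E)%E.

Definition hgam (gam : 'I_d -> R) (x : 'I_d -> nat) : R :=
  \sum_(i < d) expR (dotv (gvec gam i) (fun k => (x k)%:R)).

End Jackson.

Definition limsup_infty (R : realType) (d : nat) (g : ('I_d -> nat) -> R) : \bar R :=
  ereal_inf [set ereal_sup [set (g x)%:E | x in [set x | (N <= \sum_(k < d) x k)%N]]
            | N in [set: nat]].

From Stdlib Require Import Relations.
From HB Require Import structures.
From mathcomp Require Import all_boot all_order all_algebra.
From mathcomp Require Import all_classical all_reals all_analysis.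
From mathcomp Require Import ring lra.
Set Implicit Arguments. Unset Strict Implicit. Unset Printing Implicit Defensive.
Import Order.TTheory GRing.Theory Num.Theory numFieldNormedType.Exports.
Local Open Scope ring_scope.
Local Open Scope classical_set_scope.

(* Write [e_j x = exp (gamma_j . x)].  An arrival at queue [i] multiplies [e_j]
   by [1 + Q_ij gamma_j]; with the first-step equations for [Q] and the traffic
   equations this gives [L e_j = c_j e_j], where [c_j = gamma_j nu_j / G_jj] if
   queue [j] is empty and [c_j = gamma_j (nu_j - mu_j / (1 + gamma_j)) / G_jj]
   otherwise.  So [L h / h] is an average of the [c_j] with weights [e_j / h].
   For [gamma] in [Gamma], a compactness argument on the face
   [{v >= 0, v_j = 0, sum v = 1}] gives [delta > 0] such that, whenever
   [x_j = 0], some [k] has [(gamma_k - gamma_j) . x >= delta |x|]; hence the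
   weights of empty queues vanish as [|x| -> oo] and the limsup is the largest
   busy rate, attained along [n epsilon^i].  [I - P] is invertible by (A): a
   nonzero [P]-harmonic vector attains its maximal modulus on a set of queues
   that is closed under routing and has no exit, and the number of customers in
   such a set can never increase along transitions of [q]. *)

Section Hitting.
Variables (R : realType) (d : nat) (P : 'M[R]_d).
Hypothesis P_ge0 : forall i j, 0 <= P i j.
Hypothesis P_rowsum_le1 : forall i, \sum_(j < d) P i j <= 1.

Lemma hitn_ge0_le1 j n i : 0 <= hitn P j n i <= 1.
Proof.
elim: n i => [|n IH] i /=; first by case: (i == j); rewrite ?lexx ?ler01.
case: (i == j); first by rewrite ler01 lexx.
apply/andP; split.
  by apply: sumr_ge0 => k _; rewrite mulr_ge0 // (andP (IH k)).1.
apply: le_trans (P_rowsum_le1 i); apply: ler_sum => k _.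
by have /andP[_ h1] := IH k; rewrite ler_piMr.
Qed.

Lemma hitn_nondecreasing j i : nondecreasing_seq (fun n => hitn P j n i).
Proof.
apply/nondecreasing_seqP => n; elim: n i => [|n IH] i /=; case: (i == j) => //.
  by apply: sumr_ge0 => k _; rewrite mulr_ge0 // (andP (hitn_ge0_le1 j 0 k)).1.
by apply: ler_sum => k _; exact: ler_wpM2l.
Qed.

Lemma hitn_cvg j i : cvgn (fun n => hitn P j n i).
Proof.
apply: nondecreasing_is_cvgn; first exact: hitn_nondecreasing.
by exists 1 => _ [n _ <-]; exact: (andP (hitn_ge0_le1 j n i)).2.
Qed.

Lemma Qhit_ge0 i j : 0 <= Qhit P i j.
Proof.
apply: limr_ge; first exact: hitn_cvg.
by near=> n; exact: (andP (hitn_ge0_le1 j n i)).1.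
Unshelve. all: by end_near. Qed.

Lemma Qhit_id j : Qhit P j j = 1.
Proof.
rewrite /Qhit (_ : (fun n => _) = fun=> 1) ?lim_cst //.
by apply: funext => -[|n] /=; rewrite eqxx.
Qed.

Lemma Qhit_first_step i j : i != j -> Qhit P i j = \sum_(k < d) P i k * Qhit P k j.
Proof.
move=> ij; apply: cvg_lim => //; rewrite -cvg_shiftS /= (negbTE ij).
apply: cvg_big => [|k _]; first exact: add_continuous.
by apply: cvgMl_tmp; exact: hitn_cvg.
Qed.

(* [escape j]: probability that the routing chain started at [j] is absorbed
   in [0] before returning to [j]. *)
Definition escape j := 1 - \sum_(k < d) P j k * Qhit P k j.

Lemma sum_P_Qhit i j :
  \sum_(k < d) P i k * Qhit P k j = Qhit P i j - (i == j)%:R * escape j.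
Proof.
have [->|ij] := eqVneq i j; first by rewrite Qhit_id mul1r opprB addrC subrK.
by rewrite mul0r subr0 Qhit_first_step.
Qed.

Lemma sum_lam_Qhit (lam nu : 'I_d -> R) j :
  (forall k, nu k = lam k + \sum_(i < d) nu i * P i k) ->
  \sum_(k < d) lam k * Qhit P k j = nu j * escape j.
Proof.
move=> traffic; have lamE k : lam k = nu k - \sum_(i < d) nu i * P i k.
  by rewrite [in RHS]traffic addrK.
under eq_bigr do rewrite lamE mulrBl mulr_suml.
rewrite sumrB exchange_big /=.
have step i : \sum_(k < d) nu i * P i k * Qhit P k j =
              nu i * Qhit P i j - (i == j)%:R * (nu j * escape j).
  under eq_bigr do rewrite -mulrA.
  rewrite -mulr_sumr sum_P_Qhit mulrBr.
  by have [->|_] := eqVneq i j; rewrite ?mul1r ?mul0r ?mulr0.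
under [X in _ - X]eq_bigr do rewrite step.
rewrite sumrB opprB addrC subrK (bigD1 j) //= eqxx mul1r big1 ?addr0 // => i /negbTE->.
by rewrite mul0r.
Qed.

Lemma Green_diag_escape j :
  (1%:M - P) \in unitmx -> invmx (1%:M - P) j j * escape j = 1.
Proof.
move=> unitA; pose q : 'cV[R]_d := \col_k Qhit P k j.
have Aq : (1%:M - P) *m q = escape j *: delta_mx j 0.
  apply/colP => k; rewrite !mxE.
  under eq_bigr do rewrite !mxE mulrBl.
  rewrite sumrB sum_P_Qhit (bigD1 k) //= eqxx mul1r big1 ?addr0 => [|l].
    by rewrite opprB addrC subrK andbT mulrC.
  by rewrite eq_sym => /negbTE->; rewrite mul0r.
have := congr1 (fun M => (invmx (1%:M - P) *m M) j 0) Aq.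
by rewrite mulKmx // -scalemxAr -colE !mxE Qhit_id mulrC.
Qed.

End Hitting.

Section Moves.
Variables (R : realType) (d : nat) (lam mu : 'I_d -> R) (P : 'M[R]_d).
Hypothesis mu_ge0 : forall i, 0 <= mu i.

Local Notation unitv i := (fun k : 'I_d => ((k == i) : nat)%:Z).

Lemma qrate_gt0_move v : 0 < qrate lam mu P v ->
  [\/ exists i, v = unitv i,
      exists2 i, v = (fun k => - unitv i k) & 0 < p0 P i
    | exists i j, v = (fun k => unitv j k - unitv i k) /\ 0 < P i j].
Proof.
move=> q_gt0; apply: contrapT => no_move; move: q_gt0; apply/negP; rewrite -leNgt.
rewrite -[0]addr0; apply: lerD; apply: sumr_le0 => i _; last (apply: sumr_le0 => j _).
- rewrite -[0]addr0; apply: lerD.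
    case: eqfunP => [/funext v_ei|_]; last by rewrite mulr0.
    by case: no_move; apply: Or31; exists i.
  case: eqfunP => [/funext v_ei|_]; last by rewrite mulr0.
  rewrite mulr1; apply: mulr_ge0_le0; first exact: mu_ge0.
  rewrite leNgt; apply/negP => p0_gt0.
  by case: no_move; apply: Or32; exists i.
- case: eqfunP => [/funext v_eji|_]; last by rewrite mulr0.
  rewrite mulr1; apply: mulr_ge0_le0; first exact: mu_ge0.
  rewrite leNgt; apply/negP => Pij_gt0.
  by case: no_move; apply: Or33; exists i, j.
Qed.

Lemma sum_unitv (S : pred 'I_d) j : \sum_(k | S k) unitv j k = (S j)%:Z.
Proof.
rewrite (big_mkcond S) (bigD1 j) //= eqxx big1 ?addr0 => [|k /negbTE->]; last by case: (S k).
by case: (S j).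
Qed.

Section ClosedClass.
Variable S : pred 'I_d.
Hypothesis S_no_exit : forall k, S k -> p0 P k = 0.
Hypothesis S_closed : forall k l, S k -> 0 < P k l -> S l.

Lemma mass_move_ge0 v : 0 < qrate lam mu P v -> 0 <= \sum_(k | S k) v k.
Proof.
case/qrate_gt0_move => [[i ->]|[i -> p0_gt0]|[i [j [-> Pij_gt0]]]].
- by rewrite sum_unitv.
- rewrite sumrN sum_unitv oppr_ge0; case Si: (S i) => //.
  by rewrite S_no_exit ?ltxx in p0_gt0.
- by rewrite sumrB !sum_unitv subr_ge0; case Si: (S i); rewrite ?(S_closed Si Pij_gt0).
Qed.

Lemma mass_clos_trans_nonincr x y :
  Relation_Operators.clos_trans ('I_d -> int)
    (fun a b => 0 < qrate lam mu P (fun k => a k - b k)) x y ->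
  \sum_(k | S k) y k <= \sum_(k | S k) x k.
Proof.
elim=> [a b /mass_move_ge0|a b c _ le_ba _ le_cb]; last exact: le_trans le_cb le_ba.
by rewrite sumrB subr_ge0.
Qed.

End ClosedClass.

End Moves.

Section Harmonic.
Variables (R : realType) (d : nat) (P : 'M[R]_d).
Hypothesis P_ge0 : forall i j, 0 <= P i j.
Hypothesis P_rowsum_le1 : forall i, \sum_(j < d) P i j <= 1.

Lemma harmonic_of_not_unitmx : (1%:M - P) \notin unitmx ->
  exists2 u : 'I_d -> R, (exists k, u k != 0) & forall k, u k = \sum_(l < d) P k l * u l.
Proof.
rewrite -unitmx_tr unitmxE unitfE negbK => /det0P[v v_neq0 vA].
exists (v ord0).
  apply/existsP; apply: contraNT v_neq0 => /existsPn v0; apply/eqP/rowP => k.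
  by rewrite mxE; exact/eqP/negbNE.
move=> k; have := congr1 (fun w : 'rV[R]_d => w ord0 k) vA; rewrite !mxE => /eqP.
under eq_bigr do rewrite !mxE mulrBr mulrC.
rewrite sumrB subr_eq0 (bigD1 k) //= eqxx mul1r big1 ?addr0 => [/eqP->|l].
  by apply: eq_bigr => l _; rewrite mulrC.
by rewrite eq_sym => /negbTE->; rewrite mul0r.
Qed.

Lemma harmonic_max_principle (u : 'I_d -> R) k :
  (forall i, u i = \sum_(l < d) P i l * u l) ->
  (forall l, `|u l| <= `|u k|) -> 0 < `|u k| ->
  \sum_(l < d) P k l = 1 /\ forall l, 0 < P k l -> `|u l| = `|u k|.
Proof.
move=> u_harm u_max M_gt0; set M := `|u k| in u_max M_gt0 *.
have le_M_avg : M <= \sum_(l < d) P k l * `|u l|.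
  rewrite /M u_harm; apply: le_trans (ler_norm_sum _ _ _) _.
  by apply: ler_sum => l _; rewrite normrM ger0_norm.
have le_avg_M : \sum_(l < d) P k l * `|u l| <= M * \sum_(l < d) P k l.
  by rewrite mulr_sumr; apply: ler_sum => l _; rewrite mulrC ler_wpM2r.
have le_M : M * \sum_(l < d) P k l <= M by rewrite ler_piMr // ltW.
have rowsum1 : M * \sum_(l < d) P k l = M.
  by apply/le_anti; rewrite le_M (le_trans le_M_avg le_avg_M).
split=> [|l Pkl_gt0]; first by apply: (mulfI (lt0r_neq0 M_gt0)); rewrite rowsum1 mulr1.
have gap0 : \sum_(l < d) P k l * (M - `|u l|) = 0.
  under eq_bigr do rewrite mulrBr mulrC.
  rewrite sumrB -mulr_sumr rowsum1; apply/eqP; rewrite subr_eq0 eq_sym; apply/eqP/le_anti.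
  by rewrite le_M_avg (le_trans le_avg_M le_M).
have /psumr_eq0P/(_ gap0 l isT)/eqP : forall l, true -> 0 <= P k l * (M - `|u l|).
  by move=> m _; rewrite mulr_ge0 // subr_ge0.
by rewrite mulf_eq0 (gt_eqF Pkl_gt0) subr_eq0 => /eqP.
Qed.

End Harmonic.

Lemma hypA_unitmx (R : realType) (d : nat) (lam mu : 'I_d -> R) (P : 'M[R]_d) :
  (forall i, 0 <= mu i) -> (forall i j, 0 <= P i j) ->
  (forall i, \sum_(j < d) P i j <= 1) ->
  hypA lam mu P -> (1%:M - P) \in unitmx.
Proof.
move=> mu_ge0 P_ge0 P_le1 hA; apply/negPn/negP.
case/harmonic_of_not_unitmx => [u [k1 uk1_neq0] u_harm].
have [k0 _ u_max] := @arg_maxP _ _ _ k1 xpredT (fun k => `|u k|) isT.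
have M_gt0 : 0 < `|u k0| by apply: lt_le_trans (u_max k1 isT); rewrite normr_gt0.
pose S k := `|u k| == `|u k0|.
have S_max k : S k -> \sum_(l < d) P k l = 1 /\ forall l, 0 < P k l -> `|u l| = `|u k|.
  move=> /eqP Sk; apply: harmonic_max_principle; rewrite // Sk //.
  by move=> l; exact: u_max.
have S_no_exit k : S k -> p0 P k = 0 by case/S_max => rowsum1 _; rewrite /p0 rowsum1 subrr.
have S_closed k l : S k -> 0 < P k l -> S l.
  by move=> Sk /(proj2 (S_max k Sk)); rewrite /S => ->.
(* By (A) the state [0] leads to the unit vector at [k0], which would raise the
   number of customers in [S]. *)
have := mass_clos_trans_nonincr mu_ge0 S_no_exit S_closed
  (hA (fun=> 0) (fun k => ((k == k0) : nat)%:Z)).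
by rewrite sum_unitv big1 // /S eqxx.
Qed.

Lemma dotv_up (R : realType) d (g : 'I_d -> R) i y :
  dotv g (fun k => (up i y k)%:R) = dotv g (fun k => (y k)%:R) + g i.
Proof.
rewrite /dotv /up; under eq_bigr do rewrite natrD mulrDr.
rewrite big_split /=; congr (_ + _).
by rewrite (bigD1 i) //= eqxx mulr1 big1 ?addr0 // => k /negbTE->; rewrite mulr0.
Qed.

Lemma dotv_dn (R : realType) d (g : 'I_d -> R) i y : (0 < y i)%N ->
  dotv g (fun k => (dn i y k)%:R) = dotv g (fun k => (y k)%:R) - g i.
Proof.
move=> yi_gt0; rewrite /dotv /dn.
have natrB_eq k : ((y k - (k == i))%N%:R : R) = (y k)%:R - (k == i)%:R.
  by rewrite natrB //; case: eqP => [->|].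
under eq_bigr do rewrite natrB_eq mulrBr.
rewrite sumrB; congr (_ - _).
by rewrite (bigD1 i) //= eqxx mulr1 big1 ?addr0 // => k /negbTE->; rewrite mulr0.
Qed.

Lemma gen_sum (R : realType) d (lam mu : 'I_d -> R) (P : 'M[R]_d)
    (F : 'I_d -> ('I_d -> nat) -> R) y :
  gen lam mu P (fun x => \sum_(j < d) F j x) y = \sum_(j < d) gen lam mu P (F j) y.
Proof.
rewrite /gen !big_split /=; congr (_ + _ + _);
  rewrite [RHS]exchange_big /=; apply: eq_bigr => i _.
- by rewrite -sumrB mulr_sumr.
- by rewrite -sumrB mulr_sumr.
by rewrite [RHS]exchange_big /=; apply: eq_bigr => l _; rewrite -sumrB mulr_sumr.
Qed.

Section Generator.
Variables (R : realType) (d : nat) (lam mu nu : 'I_d -> R) (P : 'M[R]_d) (gam : 'I_d -> R).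
Hypothesis P_ge0 : forall i j, 0 <= P i j.
Hypothesis P_diag : forall i, P i i = 0.
Hypothesis P_rowsum_le1 : forall i, \sum_(j < d) P i j <= 1.
Hypothesis gam_ge0 : forall i, 0 <= gam i.
Hypothesis traffic : forall j, nu j = lam j + \sum_(i < d) nu i * P i j.

Definition hterm j (y : 'I_d -> nat) := expR (dotv (gvec P gam j) (fun k => (y k)%:R)).

Definition jump_factor i j := 1 + Qhit P i j * gam j.

Lemma jump_factor_gt0 i j : 0 < jump_factor i j.
Proof. by rewrite ltr_wpDr // mulr_ge0 // Qhit_ge0. Qed.

Lemma hterm_up j i y : hterm j (up i y) = hterm j y * jump_factor i j.
Proof. by rewrite /hterm dotv_up expRD lnK // posrE jump_factor_gt0. Qed.

Lemma hterm_dn j i y : (0 < y i)%N -> hterm j (dn i y) = hterm j y / jump_factor i j.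
Proof. by move=> yi_gt0; rewrite /hterm dotv_dn // expRD expRN lnK // posrE jump_factor_gt0. Qed.

Lemma exit_add_sum_P_jump_factor i j :
  p0 P i + \sum_(l < d) P i l * jump_factor l j
  = jump_factor i j - (i == j)%:R * (gam j * escape P j).
Proof.
under eq_bigr do rewrite mulrDr mulr1 mulrA.
rewrite big_split /= -mulr_suml sum_P_Qhit // /p0 /jump_factor; ring.
Qed.

Lemma departure_hterm i j y : (0 < y i)%N ->
  p0 P i * (hterm j (dn i y) - hterm j y)
  + \sum_(l < d | l != i) P i l * (hterm j (up l (dn i y)) - hterm j y)
  = - hterm j y * ((i == j)%:R * (gam j * escape P j / (1 + gam j))).
Proof.
move=> yi_gt0; have a_neq0 := lt0r_neq0 (jump_factor_gt0 i j).
set e := hterm j y; set a := jump_factor i j.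
have -> : \sum_(l < d | l != i) P i l * (hterm j (up l (dn i y)) - e)
          = e / a * \sum_(l < d) P i l * jump_factor l j - e * \sum_(l < d) P i l.
  rewrite [X in _ = _ * X - _](bigD1 i) //= [X in _ = _ - _ * X](bigD1 i) //=.
  rewrite P_diag !mul0r !add0r !mulr_sumr -sumrB; apply: eq_bigr => l _.
  by rewrite hterm_up hterm_dn // -/e -/a; ring.
have a_jj : i = j -> a = 1 + gam j by move=> ij; rewrite /a /jump_factor ij Qhit_id mul1r.
have := exit_add_sum_P_jump_factor i j; rewrite hterm_dn // -/e -/a /p0.
set S0 := \sum_(l < d) P i l; set S1 := \sum_(l < d) P i l * _ => S1E.
have {S1E}-> : S1 = a - (i == j)%:R * (gam j * escape P j) - (1 - S0).
  by rewrite -S1E addrC addKr.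
have [/a_jj <-|_] := eqVneq i j; last by rewrite !mul0r; field.
by field.
Qed.

Lemma gen_hterm j y :
  gen lam mu P (hterm j) y
  = hterm j y * (gam j * escape P j * (nu j - (0 < y j)%N%:R * (mu j / (1 + gam j)))).
Proof.
set e := hterm j y; set c := gam j * escape P j / (1 + gam j).
have departures i :
    (0 < y i)%N%:R * (mu i * p0 P i) * (hterm j (dn i y) - e)
    + \sum_(l < d | l != i) (0 < y i)%N%:R * (mu i * P i l) * (hterm j (up l (dn i y)) - e)
    = (i == j)%:R * (- e * ((0 < y j)%N%:R * mu j * c)).
  case: (posnP (y i)) => [yi0|yi_gt0].
    rewrite !mul0r add0r big1 => [|l _]; last by rewrite !mul0r.
    by have [<-|_] := eqVneq i j; rewrite ?yi0 !mul0r ?mulr0.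
  under eq_bigr do rewrite -!mulrA.
  rewrite -mulrA -mulr_sumr -mulrDr -mulrA -mulr_sumr -mulrDr departure_hterm //.
  by have [?|_] := eqVneq i j; first subst i; rewrite ?yi_gt0 /e /c /=; ring.
have arrivals : \sum_(i < d) lam i * (hterm j (up i y) - e) = e * (gam j * (nu j * escape P j)).
  have arrival i : lam i * (hterm j (up i y) - e) = e * gam j * (lam i * Qhit P i j).
    by rewrite hterm_up /jump_factor /e; ring.
  under eq_bigr do rewrite arrival.
  by rewrite -mulr_sumr (sum_lam_Qhit P_ge0 P_rowsum_le1 j traffic) -mulrA.
rewrite /gen -/e -addrA -big_split /=.
rewrite arrivals (eq_bigr _ (fun i _ => departures i)).
rewrite (bigD1 j) //= eqxx mul1r big1 ?addr0 => [|i /negbTE->]; last by rewrite mul0r.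
by rewrite /c; ring.
Qed.

End Generator.

Lemma dotv_continuous (R : realType) d (c : 'I_d -> R) :
  continuous (fun v : 'rV[R]_d => dotv c (v ord0)).
Proof.
apply: continuous_big => [|i _]; first exact: add_continuous.
move=> v; apply: continuousM; [exact: cst_continuous | exact: coord_continuous].
Qed.

Lemma dotv_divr (R : realType) d (c x : 'I_d -> R) t :
  dotv c (fun i => x i / t) = dotv c x / t.
Proof. by rewrite /dotv mulr_suml; apply: eq_bigr => i _; rewrite mulrA. Qed.

Section Domination.
Variables (R : realType) (d : nat) (g : 'I_d -> 'I_d -> R) (j : 'I_d).
Hypothesis g_sep : forall v, (forall k, 0 <= v k) -> (exists k, v k != 0) -> v j = 0 ->
  exists k, dotv (g j) v < dotv (g k) v.

Let gap (v : 'rV[R]_d) :=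
  \big[Order.max/0]_(k < d) (dotv (g k) (v ord0) - dotv (g j) (v ord0)).

Let face := [set v : 'rV[R]_d |
  forall i, (if i == j then `[0, 0] else `[0, 1]) (v ord0 i)]%classic
  `&` [set v | \sum_(i < d) v ord0 i = 1].

Lemma face_compact : compact face.
Proof.
apply: compact_closedI.
  by apply: (@rV_compact _ _ (fun i => if i == j then _ else _)) => i;
    case: ifP => _; exact: segment_compact.
apply: (@preimage_closed _ _ (fun v : 'rV[R]_d => \sum_(i < d) v ord0 i) [set 1]).
  move=> v _; apply: continuous_big => [|i _]; first exact: add_continuous.
  exact: coord_continuous.
exact/accessible_closed_set1/hausdorff_accessible/Rhausdorff.
Qed.

Lemma gap_continuous : continuous gap.
Proof.
apply: continuous_big => [|k _]; first exact: max_continuous.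
by move=> v; apply: continuousB; exact: dotv_continuous.
Qed.

Lemma gap_bounded_below_on_face : exists2 δ, 0 < δ &
  forall v, face v -> exists k, δ <= dotv (g k) (v ord0) - dotv (g j) (v ord0).
Proof.
have [[v0 face_v0]|face_empty] := pselect (face !=set0); last first.
  by exists 1 => // v face_v; case: face_empty; exists v.
have [c /set_mem[c_box c_sum] c_min] := EVT_min_rV (ex_intro _ v0 face_v0) face_compact
  (continuous_subspaceT gap_continuous).
have c_ge0 i : 0 <= c ord0 i.
  by move: (c_box i); case: ifP => _; rewrite /= in_itv /= => /andP[].
have c_j : c ord0 j = 0.
  by move: (c_box j); rewrite eqxx /= in_itv /= => /andP[? ?]; apply/le_anti/andP.
have c_neq0 : exists k, c ord0 k != 0.
  apply/existsP; apply: contraT => /existsPn c0; move: c_sum.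
  rewrite /= big1 => [/esym/eqP|k _]; first by rewrite oner_eq0.
  exact/eqP/negbNE/c0.
have [k0 lt_k0] := g_sep c_ge0 c_neq0 c_j.
have gap_c_gt0 : 0 < gap c.
  by apply: lt_le_trans (le_bigmax _ _ k0); rewrite subr_gt0.
exists (gap c) => // v face_v; apply: contrapT => no_k.
have : gap v < gap c.
  apply/bigmax_ltP; split=> // k _.
  by rewrite ltNge; apply/negP => le_k; apply: no_k; exists k.
by rewrite ltNge c_min // inE.
Qed.

Lemma dominating_index : exists2 δ, 0 < δ & forall x : 'I_d -> nat, x j = 0%N ->
  exists k, δ * (\sum_(i < d) x i)%N%:R
            <= dotv (g k) (fun i => (x i)%:R) - dotv (g j) (fun i => (x i)%:R).
Proof.
have [δ δ_gt0 face_gap] := gap_bounded_below_on_face.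
exists δ => // x x_j; set n := (\sum_(i < d) x i)%N.
have [n0|n_gt0] := posnP n; first by exists j; rewrite n0 mulr0 subrr.
have xv : (fun i => (x i)%:R / n%:R) = (\row_i ((x i)%:R / n%:R) : 'rV[R]_d) ord0.
  by apply: funext => i; rewrite mxE.
have [|k] := face_gap (\row_i ((x i)%:R / n%:R)).
  split=> [i|] /=; last first.
    under eq_bigr do rewrite mxE.
    by rewrite -mulr_suml -natr_sum divff // pnatr_eq0 -lt0n.
  have x_le_n : (x i <= n)%N by rewrite /n (bigD1 i) //= leq_addr.
  rewrite mxE; case: ifPn => [/eqP->|_]; rewrite /= in_itv /= ?x_j ?mul0r ?lexx //.
  by rewrite divr_ge0 // ler_pdivrMr ?ltr0n // mul1r ler_nat.
rewrite -xv !dotv_divr -mulrBl ler_pdivlMr ?ltr0n // => le_k.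
by exists k.
Qed.

End Domination.

Lemma limsup_infty_eq (R : realType) d (f : ('I_d -> nat) -> R) (D : R) :
  (forall ε, 0 < ε -> \forall N \near \oo,
     forall x, (N <= \sum_(k < d) x k)%N -> f x <= D + ε) ->
  (forall ε, 0 < ε -> forall N, exists2 x, (N <= \sum_(k < d) x k)%N & D - ε <= f x) ->
  limsup_infty f = D%:E.
Proof.
move=> f_upper f_lower; apply/le_anti/andP; split.
- apply/lee_addgt0Pr => ε ε_gt0; have [N _ le_fD] := f_upper ε ε_gt0.
  apply: le_trans (ereal_inf_lbound _) _; first by exists N.
  by apply: ge_ereal_sup => _ [x Nx <-]; rewrite -EFinD lee_fin; exact: le_fD (leqnn N) x Nx.
- apply: le_ereal_inf_tmp => _ [N _ <-].
  apply/lee_addgt0Pr => ε ε_gt0; have [x Nx le_Df] := f_lower ε ε_gt0 N.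
  rewrite -leeBlDr //; apply: le_ereal_sup_tmp; exists (f x)%:E; first by exists x.
  by rewrite -EFinB lee_fin.
Qed.

Section WeightedAverage.
Variables (R : realType) (d : nat) (w : 'I_d -> ('I_d -> nat) -> R) (a b : 'I_d -> R).
Variable i0 : 'I_d.
Hypothesis w_ge0 : forall j x, 0 <= w j x.
Hypothesis w_sum1 : forall x, \sum_(j < d) w j x = 1.
Hypothesis a_max : forall j, a j <= a i0.
Hypothesis w_vanish : forall j η, 0 < η -> \forall N \near \oo,
  forall x, (N <= \sum_(k < d) x k)%N -> x j = 0%N -> w j x <= η.

Let avg x := \sum_(j < d) w j x * (if (0 < x j)%N then a j else b j).
Let K := \sum_(j < d) `|b j - a i0|.

Let K_ge0 : 0 <= K. Proof. by apply: sumr_ge0 => j _. Qed.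

Lemma avg_sub_max x :
  avg x - a i0 = \sum_(j < d) w j x * ((if (0 < x j)%N then a j else b j) - a i0).
Proof.
rewrite {1}(_ : a i0 = \sum_(j < d) w j x * a i0) -?sumrB; last first.
  by rewrite -mulr_suml w_sum1 mul1r.
by apply: eq_bigr => j _; rewrite mulrBr.
Qed.

Lemma small_idle_weights η : 0 < η -> \forall N \near \oo,
  forall x, (N <= \sum_(k < d) x k)%N -> forall j, x j = 0%N ->
  `|w j x * (b j - a i0)| <= η * `|b j - a i0|.
Proof.
move=> η_gt0; apply: filterS (filter_forall _ (fun j => w_vanish j η_gt0)).
move=> N w_small x Nx j x_j.
by rewrite normrM ger0_norm // ler_wpM2r // (w_small j x Nx x_j).
Qed.

Lemma avg_upper ε : 0 < ε -> \forall N \near \oo,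
  forall x, (N <= \sum_(k < d) x k)%N -> avg x <= a i0 + ε.
Proof.
move=> ε_gt0; have K1_gt0 : 0 < K + 1 by have := K_ge0; lra.
have := small_idle_weights (divr_gt0 ε_gt0 K1_gt0).
apply: filterS => N small x Nx; rewrite -lerBlDl avg_sub_max.
apply: le_trans (_ : \sum_(j < d) ε / (K + 1) * `|b j - a i0| <= _).
  apply: ler_sum => j _; case: (posnP (x j)) => [x_j|x_j_gt0].
    exact: le_trans (ler_norm _) (small x Nx j x_j).
  apply: le_trans (_ : 0 <= _); last by rewrite mulr_ge0 // ltW // divr_gt0.
  by rewrite mulr_ge0_le0 // subr_le0.
rewrite -mulr_sumr -/K mulrAC ler_pdivrMr //; have := K_ge0; nra.
Qed.

Lemma avg_lower ε : 0 < ε -> forall N,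
  exists2 x, (N <= \sum_(k < d) x k)%N & a i0 - ε <= avg x.
Proof.
move=> ε_gt0 N; have K1_gt0 : 0 < K + 1 by have := K_ge0; lra.
have [N0 _ small] := small_idle_weights (divr_gt0 ε_gt0 K1_gt0).
pose n := (maxn N N0).+1; pose x : 'I_d -> nat := fun k => if k == i0 then n else 0%N.
have sum_x : (\sum_(k < d) x k)%N = n.
  by rewrite (bigD1 i0) //= /x eqxx big1 ?addn0 // => k /negbTE->.
exists x; first by rewrite sum_x leqW // leq_maxl.
suff : - (avg x - a i0) <= ε by lra.
rewrite avg_sub_max -sumrN.
apply: le_trans (_ : \sum_(j < d) ε / (K + 1) * `|b j - a i0| <= _).
  apply: ler_sum => j _; have [->|j_neq] := eqVneq j i0.
    by rewrite /x eqxx subrr mulr0 oppr0 mulr_ge0 // ltW // divr_gt0.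
  have x_j : x j = 0%N by rewrite /x (negbTE j_neq).
  rewrite x_j /=; apply: le_trans (_ : `|w j x * (b j - a i0)| <= _).
    by rewrite -normrN ler_norm.
  by apply: (small N0 (leqnn N0)); rewrite // sum_x leqW // leq_maxr.
rewrite -mulr_sumr -/K mulrAC ler_pdivrMr //; have := K_ge0; nra.
Qed.

Lemma limsup_weighted_average : limsup_infty avg = (a i0)%:E.
Proof. exact: limsup_infty_eq avg_upper avg_lower. Qed.

End WeightedAverage.

Lemma expR_linear_decay (R : realType) (δ η : R) : 0 < δ -> 0 < η ->
  \forall n \near \oo, expR (- (δ * n%:R)) <= η.
Proof.
move=> δ_gt0 η_gt0; exists (Num.trunc (δ * η)^-1).+1 => // n /= Nn.
have lt_n : (δ * η)^-1 < n%:R by apply: lt_le_trans (truncnS_gt _) _; rewrite ler_nat.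
rewrite expRN -[_^-1]div1r ler_pdivrMr ?expR_gt0 //.
apply: le_trans (_ : η * (1 + δ * n%:R) <= _); last by rewrite ler_pM2l // expR_ge1Dx.
apply: le_trans (_ : η * (δ * n%:R) <= _); last by rewrite ler_pM2l // lerDr.
move: lt_n; rewrite -[(δ * η)^-1]div1r ltr_pdivrMr ?mulr_gt0 // => /ltW.
by rewrite mulrCA mulrA [_ * η]mulrC.
Qed.

Lemma inGamma_sep (R : realType) d (P : 'M[R]_d) gam j : inGamma P gam ->
  forall v, (forall k, 0 <= v k) -> (exists k, v k != 0) -> v j = 0 ->
  exists k, dotv (gvec P gam j) v < dotv (gvec P gam k) v.
Proof.
move=> [_ Gamma_sep] v v_ge0 v_neq0 v_j; have := Gamma_sep j v v_ge0 v_neq0 v_j.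
rewrite (bigmax_eq_arg _ j) // => [|i _]; last exact: leNye.
by rewrite lte_fin => lt_arg; eexists; exact: lt_arg.
Qed.

Lemma oppe_bigmin_oppr (R : realType) d (a : 'I_d -> R) i0 :
  (forall j, a j <= a i0) ->
  (- (\big[Order.min/+oo%E]_(i < d) (- a i)%:E) = (a i0)%:E)%E.
Proof.
move=> a_max; have -> : \big[Order.min/+oo%E]_(i < d) (- a i)%:E = (- a i0)%:E.
  apply/le_anti/andP; split; first exact: bigmin_le.
  by apply: le_bigmin => [|i _]; rewrite ?leey // lee_fin lerN2.
by rewrite EFinN oppeK.
Qed.

Section Drift.
Variables (R : realType) (d : nat) (lam mu nu : 'I_d -> R) (P : 'M[R]_d) (gam : 'I_d -> R).
Hypothesis P_ge0 : forall i j, 0 <= P i j.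
Hypothesis P_diag : forall i, P i i = 0.
Hypothesis P_rowsum_le1 : forall i, \sum_(j < d) P i j <= 1.
Hypothesis traffic : forall j, nu j = lam j + \sum_(i < d) nu i * P i j.
Hypothesis gam_Gamma : inGamma P gam.

Let gam_ge0 : forall i, 0 <= gam i := gam_Gamma.1.

Definition busy_drift j := gam j * escape P j * (nu j - mu j / (1 + gam j)).
Definition idle_drift j := gam j * escape P j * nu j.

Lemma gen_hgam_ratio x :
  gen lam mu P (hgam P gam) x / hgam P gam x
  = \sum_(j < d) hterm P gam j x / hgam P gam x
                 * (if (0 < x j)%N then busy_drift j else idle_drift j).
Proof.
rewrite (gen_sum _ _ _ (hterm P gam)) mulr_suml; apply: eq_bigr => j _.
rewrite (@gen_hterm _ _ lam mu nu) // mulrAC /busy_drift /idle_drift.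
by case: posnP => _; rewrite ?mul1r ?mul0r ?subr0.
Qed.

Lemma hterm_le_hgam j x : hterm P gam j x <= hgam P gam x.
Proof. by rewrite /hgam (bigD1 j) //= lerDl sumr_ge0 // => k _; rewrite expR_ge0. Qed.

Lemma idle_weight_vanishes j η : 0 < η -> \forall N \near \oo,
  forall x, (N <= \sum_(k < d) x k)%N -> x j = 0%N -> hterm P gam j x / hgam P gam x <= η.
Proof.
move=> η_gt0; have [δ δ_gt0 dominated] := dominating_index (inGamma_sep gam_Gamma (j:=j)).
apply: filterS (expR_linear_decay δ_gt0 η_gt0) => N decay x Nx x_j.
have [k le_k] := dominated x x_j.
have H_gt0 : 0 < hgam P gam x := lt_le_trans (expR_gt0 _) (hterm_le_hgam k x).
apply: le_trans decay; apply: le_trans (_ : hterm P gam j x / hterm P gam k x <= _).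
  by rewrite ler_pM2l ?expR_gt0 // lef_pV2 ?posrE ?expR_gt0 // hterm_le_hgam.
rewrite /hterm -expRB ler_expR lerNr opprB; apply: le_trans le_k.
by rewrite ler_pM2l // ler_nat.
Qed.

Lemma hgam_weights_sum1 x : (0 < d)%N ->
  \sum_(j < d) hterm P gam j x / hgam P gam x = 1.
Proof.
move=> d_gt0; rewrite -mulr_suml divff // gt_eqF //.
exact: lt_le_trans (expR_gt0 _) (hterm_le_hgam (Ordinal d_gt0) x).
Qed.

Lemma busy_drift_Green j : (1%:M - P) \in unitmx ->
  gam j / invmx (1%:M - P) j j * (mu j / (1 + gam j) - nu j) = - busy_drift j.
Proof.
move=> unitA; have G_escape := Green_diag_escape P_ge0 P_rowsum_le1 j unitA.
have G_neq0 : invmx (1%:M - P) j j != 0.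
  by apply/eqP => G0; move: G_escape; rewrite G0 mul0r => /eqP; rewrite eq_sym oner_eq0.
have -> : (invmx (1%:M - P) j j)^-1 = escape P j by rewrite -[RHS](mulKf G_neq0) G_escape mulr1.
by rewrite /busy_drift; ring.
Qed.

End Drift.

Theorem theorem2p1 (R : realType) (d : nat) (lam mu : 'I_d -> R) (P : 'M[R]_d)
  (nu : 'I_d -> R) (gam : 'I_d -> R) :
  (0 < d)%N ->
  (forall i, 0 <= lam i) ->
  (forall i, 0 < mu i) ->
  (forall i j, 0 <= P i j) ->
  (forall i, P i i = 0) ->
  (forall i, \sum_(j < d) P i j <= 1) ->
  hypA lam mu P ->
  (forall j, nu j = lam j + \sum_(i < d) nu i * P i j) ->
  inGamma P gam ->
  limsup_infty (fun x => gen lam mu P (hgam P gam) x / hgam P gam x)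
  = (- \big[Order.min/+oo%E]_(i < d)
         ((gam i / (invmx (1%:M - P)) i i) * (mu i / (1 + gam i) - nu i))%:E)%E.
Proof.
move=> d_gt0 _ mu_gt0 P_ge0 P_diag P_le1 hA traffic gam_Gamma.
have unitA := hypA_unitmx (fun i => ltW (mu_gt0 i)) P_ge0 P_le1 hA.
pose a := busy_drift mu nu P gam.
pose i0 := [arg max_(i > Ordinal d_gt0) a i]%O.
have a_max j : a j <= a i0 by rewrite /i0; case: arg_maxP => // i _; exact.
under eq_bigr do rewrite busy_drift_Green //.
rewrite (oppe_bigmin_oppr a_max).
under eq_fun do rewrite (gen_hgam_ratio mu P_ge0 P_diag P_le1 traffic gam_Gamma).
apply: (limsup_weighted_average (idle_drift nu P gam) _ _ a_max) => [j x|x|j η].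
- by rewrite divr_ge0 ?expR_ge0 ?sumr_ge0 // => k _; rewrite expR_ge0.
- exact: hgam_weights_sum1.
- exact: idle_weight_vanishes.
Qed.
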